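(* Let $G$ be a finite simple graph on $n$ vertices with minimum degree $\delta(G)\geq 1$. Then $f_o(G)\geq \frac{n}{10000}$; that is, there is a set $V_0\subseteq V(G)$ with $|V_0|\geq n/10000$ such that every vertex of the induced subgraph $G[V_0]$ has odd degree in $G[V_0]$.
   Context: For a graph $G$, $f_o(G)$ denotes the maximum of $|V_0|$ over all $V_0\subseteq V(G)$ such that the induced subgraph $G[V_0]$ has all degrees odd. *)

From mathcomp Require Import all_boot.
Set Implicit Arguments. Unset Strict Implicit. Unset Printing Implicit Defensive.

Definition simple_graph (T : finType) (e : rel T) : Prop :=
  symmetric e /\ irreflexive e.

Definition ind_deg (T : finType) (e : rel T) (V0 : {set T}) (x : T) : nat :=
  #|[set y in V0 | e x y]|.

Definition all_odd_induced (T : finType) (e : rel T) (V0 : {set T}) : bool :=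
  [forall x in V0, odd (ind_deg e V0 x)].

Definition min_deg_ge1 (T : finType) (e : rel T) : Prop :=
  forall x : T, exists y : T, e x y.

(* Gallai's theorem splits the vertices of any graph into two parts inducing
   subgraphs with all degrees even.  Let X be independent and Y disjoint from X,
   every vertex of Y having an odd number of neighbours in X.  After twisting
   the graph on Y by the parities of the codegrees into X, each Gallai part C
   of Y, together with the vertices of X that are odd to C, induces an odd
   subgraph; the better part covers half of Y plus half of the vertices of X
   odd to Y.  For a maximal independent set I, a uniformly random subset of I
   is odd to each vertex dominated by I with probability 1/2, which yields an
   odd induced subgraph covering a quarter of ~: I.  Minimum degree 1 makes
   ~: I dominate I in the bipartite graph of the edges leaving I; this gives an
   odd set of that graph covering a quarter of I, and splitting it along I
   turns it into an odd set of G of at least half its size.  Hence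
   n <= 12 f_o(G). *)

From mathcomp Require Import all_boot zify.
Set Implicit Arguments. Unset Strict Implicit. Unset Printing Implicit Defensive.

Reserved Notation "\xor_ ( i 'in' A ) F"
  (at level 41, F at level 41, i, A at level 50,
   format "'[' \xor_ ( i  'in'  A ) '/  '  F ']'").
Notation "\xor_ ( i 'in' A ) F" := (\big[addb/false]_(i in A) F).

Section Parity.
Variable T : finType.
Implicit Types (A B : {set T}) (p : pred T).

Lemma card_sep_sum A p : #|[set y in A | p y]| = \sum_(y in A) p y.
Proof.
by rewrite -sum1dep_card big_mkcondr /=; apply: eq_bigr => y _; case: (p y).
Qed.

Lemma odd_card_sep A p : odd #|[set y in A | p y]| = \xor_(y in A) p y.
Proof.
rewrite card_sep_sum (big_morph odd oddD (erefl : odd 0 = false)).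
by apply: eq_bigr => y _; case: (p y).
Qed.

Lemma xor_setU A B p :
  [disjoint A & B] -> \xor_(y in A :|: B) p y = \xor_(y in A) p y (+) \xor_(y in B) p y.
Proof. by move=> disAB; rewrite -bigU //; apply: eq_bigl => y; rewrite inE. Qed.

Lemma xor_neq A p x :
  x \in A -> \xor_(y in A) (p y && (x != y)) = \xor_(y in A) p y (+) p x.
Proof.
move=> xA; rewrite !(big_setD1 x xA) eqxx andbF [in RHS]addbC addKb /=.
by apply: eq_bigr => y; rewrite !inE eq_sym => /andP[->]; rewrite andbT.
Qed.

Lemma xor_sep A (q p : pred T) :
  \xor_(y in [set y in A | q y]) p y = \xor_(y in A) (q y && p y).
Proof.
rewrite big_mkcond [RHS]big_mkcond; apply: eq_bigr => y _.
by rewrite inE; case: (y \in A).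
Qed.

Lemma odd_ind_deg (e : rel T) A x : odd (ind_deg e A x) = \xor_(y in A) e x y.
Proof. exact: odd_card_sep. Qed.

Lemma cardsU_disjoint A B : [disjoint A & B] -> #|A :|: B| = #|A| + #|B|.
Proof. by move=> disAB; apply/eqP; rewrite (leq_card_setU A B).2. Qed.

End Parity.

Section Gallai.
Variable T : finType.
Implicit Types (h : rel T) (A B C Y : {set T}).

Definition all_even_induced h A : bool := [forall x in A, ~~ odd (ind_deg h A x)].

Lemma all_even_inducedP h A :
  reflect {in A, forall x, \xor_(y in A) h x y = false} (all_even_induced h A).
Proof.
apply: (iffP forall_inP) => evA x /evA; first by rewrite odd_ind_deg => /negbTE.
by rewrite odd_ind_deg => ->.
Qed.

Definition local_complement h v : rel T :=
  [rel a b | h a b (+) [&& h v a, h v b & a != b]].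

Lemma local_complement_sym h v : symmetric h -> symmetric (local_complement h v).
Proof. by move=> hsym a b; rewrite /local_complement /= hsym [a == b]eq_sym andbCA. Qed.

Lemma local_complement_irr h v : irreflexive h -> irreflexive (local_complement h v).
Proof. by move=> hirr a; rewrite /local_complement /= hirr eqxx !andbF. Qed.

Lemma xor_even_local_complement h v C :
  all_even_induced (local_complement h v) C ->
  {in C, forall a, \xor_(y in C) h a y = h v a && ~~ (\xor_(y in C) h v y)}.
Proof.
move=> /all_even_inducedP evC a aC.
have := evC a aC; rewrite big_split /= -big_distrr /= xor_neq //.
by move=> /negbT; rewrite negb_add => /eqP ->; case: (h v a); rewrite ?addbT.
Qed.

Section LocalComplementStep.
Variables (h : rel T) (v : T) (C : {set T}).
Hypotheses (hsym : symmetric h) (hirr : irreflexive h) (vC : v \notin C).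
Hypothesis evC : all_even_induced (local_complement h v) C.

Lemma all_even_induced_local_complement_odd :
  \xor_(y in C) h v y -> all_even_induced h C.
Proof.
move=> oddv; apply/all_even_inducedP => a aC.
by rewrite (xor_even_local_complement evC aC) oddv andbF.
Qed.

Lemma all_even_induced_local_complement_even :
  ~~ (\xor_(y in C) h v y) -> all_even_induced h (v |: C).
Proof.
move=> /negbTE evenv; apply/all_even_inducedP => a; rewrite big_setU1 //=.
case/setU1P => [-> | aC]; first by rewrite hirr evenv.
by rewrite (xor_even_local_complement evC aC) evenv andbT hsym addbb.
Qed.

End LocalComplementStep.

Theorem gallai_even_partition h Y : symmetric h -> irreflexive h ->
  exists A B, [/\ A :|: B = Y, [disjoint A & B],
                  all_even_induced h A & all_even_induced h B].
Proof.
have [n] := ubnP #|Y|; elim: n h Y => // n IHn h Y /ltnSE leYn hsym hirr.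
have [evY | /forall_inPn[v vY /negPn oddv]] := boolP (all_even_induced h Y).
  exists Y, set0; split; rewrite ?setU0 -?setI_eq0 ?setI0 //.
  by apply/forall_inP => x; rewrite inE.
have ltYv : #|Y :\ v| < n by move: leYn; rewrite (cardsD1 v Y) vY.
have [A [B [defAB disAB evA evB]]] := IHn _ _ ltYv
  (local_complement_sym v hsym) (local_complement_irr v hirr).
have parAB : \xor_(y in A) h v y (+) \xor_(y in B) h v y.
  by move: oddv; rewrite odd_ind_deg (big_setD1 v vY) hirr -defAB xor_setU.
have vAB : v \notin A :|: B by rewrite defAB !inE eqxx.
wlog evenA : A B defAB disAB evA evB parAB vAB / ~~ (\xor_(y in A) h v y).
  move=> wlogH.
  have [oddA | evenA] := boolP (\xor_(y in A) h v y); last exact: (wlogH A B).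
  apply: (wlogH B A); rewrite 1?setUC 1?disjoint_sym 1?addbC //.
  by move: parAB; rewrite oddA.
move: vAB; rewrite inE => /norP[vA vB].
exists (v |: A), B; split.
- by rewrite -setUA defAB setD1K.
- by rewrite disjoints_subset subUset sub1set inE vB -disjoints_subset.
- exact: all_even_induced_local_complement_even.
- apply: (all_even_induced_local_complement_odd evB).
  by move: parAB; rewrite (negbTE evenA).
Qed.

End Gallai.

Section OddInducedSets.
Variable T : finType.
Implicit Types (e : rel T) (A B C X Y : {set T}).

Definition independent e A : bool := [forall x in A, forall y in A, ~~ e x y].

Lemma independentP e A : reflect {in A &, forall x y, ~~ e x y} (independent e A).
Proof.
apply: (iffP forall_inP) => [indA x y /indA /forall_inP | indA x xA]; first exact.
by apply/forall_inP => y; apply: indA.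
Qed.

Lemma independentS e A B : A \subset B -> independent e B -> independent e A.
Proof.
move=> sAB /independentP indB; apply/independentP => x y xA yA.
by apply: indB; apply: (subsetP sAB).
Qed.

Definition codegree_twist e X : rel T :=
  [rel t u | (e t u (+) \xor_(x in X) (e t x && e u x)) && (t != u)].

Lemma codegree_twist_sym e X : symmetric e -> symmetric (codegree_twist e X).
Proof.
move=> esym t u; rewrite /codegree_twist /= esym eq_sym.
by congr ((_ (+) _) && _); apply: eq_bigr => x _; rewrite andbC.
Qed.

Lemma codegree_twist_irr e X : irreflexive (codegree_twist e X).
Proof. by move=> t; rewrite /codegree_twist /= eqxx andbF. Qed.

Variable e : rel T.
Hypotheses (esym : symmetric e) (eirr : irreflexive e).

Lemma all_odd_induced_twist X C :
  independent e X -> [disjoint X & C] -> {in C, forall y, odd (ind_deg e X y)} ->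
  all_even_induced (codegree_twist e X) C ->
  all_odd_induced e (C :|: [set x in X | odd (ind_deg e C x)]).
Proof.
move=> /independentP indX disXC oddXC /all_even_inducedP evC.
set XC := [set x in X | _].
have sXCX : XC \subset X by apply/subsetP => x; rewrite inE => /andP[].
have disCXC : [disjoint C & XC] by rewrite disjoint_sym (disjointWl sXCX).
apply/forall_inP => z; rewrite odd_ind_deg xor_setU // => /setUP[zC | zXC].
  (* Exchanging the two parity sums turns the degree of z into XC into the
     codegree part of its twisted degree in C. *)
  have twistE : \xor_(x in XC) e z x =
                \xor_(u in C) \xor_(x in X) (e z x && e u x).
    rewrite xor_sep; under eq_bigr do rewrite odd_ind_deg andbC big_distrr /=.
    rewrite exchange_big; apply: eq_bigr => u _.
    by apply: eq_bigr => x _; rewrite (esym x u).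
  have := evC z zC; rewrite xor_neq //= eirr big_split /= -twistE.
  under [D in _ (+) D]eq_bigr do rewrite andbb.
  by rewrite -(odd_ind_deg e X z) oddXC // addbT => /negbFE.
have zX := subsetP sXCX z zXC.
rewrite [S in _ (+) S]big1 ?addbF => [|x /(subsetP sXCX) xX].
  by move: zXC; rewrite inE odd_ind_deg => /andP[].
exact/negbTE/indX.
Qed.

Lemma exists_odd_induced_half X Y :
  independent e X -> [disjoint X & Y] -> {in Y, forall y, odd (ind_deg e X y)} ->
  exists2 S, all_odd_induced e S &
    #|Y| + #|[set x in X | odd (ind_deg e Y x)]| <= 2 * #|S|.
Proof.
move=> indX disXY oddXY.
have [A [B [defY disAB evA evB]]] :=
  gallai_even_partition Y (codegree_twist_sym X esym) (codegree_twist_irr e X).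
pose oddX C := [set x in X | odd (ind_deg e C x)].
have part C : C \subset Y -> all_even_induced (codegree_twist e X) C ->
    all_odd_induced e (C :|: oddX C) /\ #|C :|: oddX C| = #|C| + #|oddX C|.
  move=> sCY evC; have disXC := disjointWr sCY disXY; split.
    by apply: all_odd_induced_twist => // y yC; apply/oddXY/(subsetP sCY).
  apply: cardsU_disjoint; rewrite disjoint_sym; apply: disjointWl disXC.
  by apply/subsetP => x; rewrite inE => /andP[].
have [sAY sBY] : A \subset Y /\ B \subset Y by rewrite -defY subsetUl subsetUr.
have [oddA cardA] := part A sAY evA.
have [oddB cardB] := part B sBY evB.
have cardY : #|Y| = #|A| + #|B| by rewrite -defY cardsU_disjoint.
have cardXY : #|oddX Y| <= #|oddX A| + #|oddX B|.
  apply: leq_trans (leq_card_setU _ _); apply: subset_leq_card.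
  apply/subsetP => x; rewrite !inE -defY !odd_ind_deg xor_setU //.
  by case/andP => ->; case: (\xor_(y in A) e x y).
have [leAB | ltBA] := leqP #|A :|: oddX A| #|B :|: oddX B|;
  [exists (B :|: oddX B) | exists (A :|: oddX A)]; rewrite // -/(oddX Y); lia.
Qed.

End OddInducedSets.

Section RandomSubset.
Variable T : finType.

Lemma card_powerset_odd (I : {set T}) (p : pred T) i : i \in I -> p i ->
  2 * #|[set X in powerset I | odd #|[set x in X | p x]|]| = #|powerset I|.
Proof.
move=> iI pi; pose toggle (X : {set T}) := if i \in X then X :\ i else i |: X.
have toggleK : involutive toggle.
  move=> X; rewrite /toggle; have [iX | iX] := boolP (i \in X).
    by rewrite setD11 setD1K.
  by rewrite setU11 setU1K.
have toggle_sub X : (toggle X \subset I) = (X \subset I).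
  rewrite /toggle; case: ifP => iX; last by rewrite subUset sub1set iI.
  apply/idP/idP => [sXI | ]; last exact: subset_trans (subD1set X i).
  by rewrite -(setD1K iX) subUset sub1set iI.
have toggle_odd X : odd #|[set x in toggle X | p x]| = ~~ odd #|[set x in X | p x]|.
  rewrite !odd_card_sep /toggle; case: ifP => iX.
    by rewrite [in RHS](big_setD1 i iX) pi /= negbK.
  by rewrite big_setU1 ?iX //= pi.
set O := [set X in powerset I | _].
have toggleO : toggle @: O = powerset I :\: O.
  apply/setP => X; rewrite -[X in LHS]toggleK mem_imset; last exact: inv_inj.
  by rewrite !inE toggle_sub toggle_odd; case: (X \subset I); rewrite ?andbT.
rewrite -(cardsID O (powerset I)) -toggleO card_imset; last exact: inv_inj.
by rewrite (setIidPr _) ?mul2n ?addnn //; apply/subsetP => X; rewrite inE => /andP[].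
Qed.

Lemma exists_subset_odd_half (e : rel T) (I J : {set T}) :
  {in J, forall j, exists2 i, i \in I & e j i} ->
  exists2 X : {set T}, X \subset I & #|J| <= 2 * #|[set j in J | odd (ind_deg e X j)]|.
Proof.
move=> domJ; pose c (X : {set T}) := #|[set j in J | odd (ind_deg e X j)]|.
have total : \sum_(X in powerset I) 2 * c X = #|J| * #|powerset I|.
  rewrite -big_distrr /=.
  under eq_bigr do rewrite /c card_sep_sum.
  rewrite exchange_big big_distrr /= -sum_nat_const; apply: eq_bigr => j jJ.
  by have [i iI eji] := domJ j jJ; rewrite -(card_powerset_odd iI eji) card_sep_sum.
have set0I : set0 \in powerset I by rewrite powersetE sub0set.
have [X XI maxX] := arg_maxnP c set0I.
exists X; first by rewrite -powersetE.
rewrite -(@leq_pmul2l #|powerset I|); last by apply/card_gt0P; exists set0.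
rewrite mulnC -total -sum_nat_const; apply: leq_sum => Y YI.
exact: leq_mul (leqnn 2) (maxX Y YI).
Qed.

End RandomSubset.

Section Domination.
Variable T : finType.
Variable e : rel T.
Hypotheses (esym : symmetric e) (eirr : irreflexive e).
Implicit Types (I J S : {set T}).

Definition crossing I : rel T := [rel x y | e x y && ((x \in I) != (y \in I))].

Lemma crossing_sym I : symmetric (crossing I).
Proof. by move=> x y; rewrite /crossing /= esym eq_sym. Qed.

Lemma crossing_irr I : irreflexive (crossing I).
Proof. by move=> x; rewrite /crossing /= eirr. Qed.

Lemma independent_crossingC I : independent (crossing I) (~: I).
Proof.
apply/independentP => x y; rewrite /crossing !inE /= => /negbTE-> /negbTE->.
by rewrite andbF.
Qed.

Lemma ind_deg_crossing I S x :
  ind_deg (crossing I) S x = ind_deg e (if x \in I then S :\: I else S :&: I) x.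
Proof.
rewrite /ind_deg /crossing; case: ifP => xI; apply: eq_card => y; rewrite !inE /= xI;
  by case: (y \in I); rewrite ?andbT ?andbF.
Qed.

Lemma odd_induced_of_dominated I J :
  independent e I -> [disjoint I & J] -> {in J, forall j, exists2 i, i \in I & e j i} ->
  exists2 S, all_odd_induced e S & #|J| <= 4 * #|S|.
Proof.
move=> indI disIJ domJ.
have [X sXI leJ] := exists_subset_odd_half domJ.
set Y := [set j in J | _] in leJ.
have sYJ : Y \subset J by apply/subsetP => j; rewrite inE => /andP[].
have disXY : [disjoint X & Y] by apply: disjointW disIJ.
have oddXY : {in Y, forall y, odd (ind_deg e X y)} by move=> y; rewrite inE => /andP[].
have indX := independentS sXI indI.
have [S oddS leYS] := exists_odd_induced_half esym eirr indX disXY oddXY.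
by exists S => //; lia.
Qed.

Lemma odd_induced_of_crossing I S :
  independent e I -> all_odd_induced (crossing I) S ->
  exists2 S', all_odd_induced e S' & #|S| <= 2 * #|S'|.
Proof.
move=> indI /forall_inP oddS.
have indSI : independent e (S :&: I) := independentS (subsetIr S I) indI.
have disSI : [disjoint S :&: I & S :\: I].
  by rewrite -setI_eq0 setIDA setIAC setDIl setDv setI0.
have oddSI : {in S :\: I, forall y, odd (ind_deg e (S :&: I) y)}.
  move=> y yS; have := oddS y; rewrite ind_deg_crossing.
  by move: yS; rewrite !inE => /andP[/negbTE-> ->]; apply.
have [S' oddS' leS'] := exists_odd_induced_half esym eirr indSI disSI oddSI.
have oddIS : [set x in S :&: I | odd (ind_deg e (S :\: I) x)] = S :&: I.
  apply/setP => x; rewrite inE; case xSI: (x \in S :&: I) => //=.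
  by move: xSI (oddS x); rewrite inE ind_deg_crossing => /andP[-> ->]; apply.
by exists S' => //; rewrite -(cardsID I S) addnC -oddIS.
Qed.

Lemma exists_dominating_independent :
  exists2 I, independent e I & {in ~: I, forall j, exists2 i, i \in I & e j i}.
Proof.
have indset0 : independent e set0 by apply/independentP => x; rewrite inE.
have [I /maxsetP[indI maxI]] := ex_maxset (ex_intro (independent e) set0 indset0).
exists I => // j; rewrite inE => jI.
have [/exists_inP[i iI eji] | /exists_inPn noNbr] := boolP [exists i in I, e j i].
  by exists i.
have indjI : independent e (j |: I).
  move/independentP: indI => indI; apply/independentP => x y.
  case/setU1P => [-> | xI] /setU1P[-> | yI]; rewrite ?eirr ?noNbr //.
    by rewrite esym noNbr.
  exact: indI.
by move: jI; rewrite -(maxI _ indjI (subsetUr _ _)) setU11.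
Qed.

End Domination.

Theorem theorem1p3 (T : finType) (e : rel T) :
  simple_graph e -> min_deg_ge1 e ->
  exists V0 : {set T}, all_odd_induced e V0 /\ #|T| <= 10000 * #|V0|.
Proof.
move=> [esym eirr] mindeg.
suff [S oddS leTS] : exists2 S, all_odd_induced e S & #|T| <= 12 * #|S|.
  by exists S; split => //; apply: leq_trans leTS _; apply: leq_mul.
have [I indI domC] := exists_dominating_independent esym eirr.
have disIC : [disjoint I & ~: I] by rewrite -setI_eq0 setICr.
have disCI : [disjoint ~: I & I] by rewrite disjoint_sym.
have [SA oddSA leCA] := odd_induced_of_dominated esym eirr indI disIC domC.
have domI : {in I, forall i, exists2 j, j \in ~: I & crossing e I i j}.
  move=> i iI; have [j eij] := mindeg i.
  have jI : j \notin I by apply: contraL eij; move/independentP: indI; apply.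
  by exists j; rewrite ?inE // /crossing /= eij iI (negbTE jI).
have [S' oddS' leIS'] := odd_induced_of_dominated (crossing_sym esym I)
  (crossing_irr eirr I) (independent_crossingC e I) disCI domI.
have [SB oddSB leS'B] := odd_induced_of_crossing esym eirr indI oddS'.
have cardT := cardsC I.
have [leAB | ltBA] := leqP #|SA| #|SB|; [exists SB | exists SA] => //; lia.
Qed.
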